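(* Let $R$ be an integral domain, $A$ a unital $R$-algebra with involution $i$, and $(\Lambda,\ge)$ a finite partially ordered set. Then $A$ has a cell datum (with respect to $i$) whose partially ordered set is $\Lambda$ if and only if $A$ has a $\Lambda$-cell net.
   Context: An involution of an $R$-algebra is an $R$-linear algebra anti-automorphism $i$ with $i^2=\mathrm{id}$. A cell datum for a unital $R$-algebra $A$ with involution $i$ consists of a finite partially ordered set $(\Lambda,\ge)$, finite sets $\mathcal T(\lambda)$ ($\lambda\in\Lambda$), and elements $c^\lambda_{s,t}\in A$ ($s,t\in\mathcal T(\lambda)$) such that: (i) they form an $R$-basis of $A$; (ii) if $\breve A^\lambda$ denotes the $R$-span of all $c^\mu_{u,v}$ with $\mu>\lambda$, then for all $\lambda$, $s\in\mathcal T(\lambda)$, $a\in A$ there are $r^s_v(a)\in R$ with $a\,c^\lambda_{s,t}\equiv\sum_v r^s_v(a)c^\lambda_{v,t}\pmod{\breve A^\lambda}$ for every $t\in\mathcal T(\lambda)$; (iii) $i(c^\lambda_{s,t})\equiv c^\lambda_{t,s}\pmod{\breve A^\lambda}$. For a left $A$-module $M$, $i(M)=\{i(m):m\in M\}$ is the right $A$-module which is a copy of $M$ as an $R$-module with $i(m)a=i(i(a)m)$. On $M\otimes_Ri(M)$ (an $A$-$A$-bimodule) the map $i$ is the $R$-linear map $x\otimes i(y)\mapsto y\otimes i(x)$. An order ideal of $\Lambda$ is a subset $\Gamma$ such that $\lambda\in\Gamma$, $\mu\ge\lambda$ imply $\mu\in\Gamma$; write $\Gamma_{\ge\lambda}=\{\mu:\mu\ge\lambda\}$,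 $\Gamma_{>\lambda}=\{\mu:\mu>\lambda\}$. A $\Lambda$-cell net is a map $\Gamma\mapsto A_\Gamma$ from order ideals of $\Lambda$ to $i$-invariant two-sided ideals of $A$ such that: (1) $A_\emptyset=0$ and $\Gamma_1\subseteq\Gamma_2\Rightarrow A_{\Gamma_1}\subseteq A_{\Gamma_2}$; (2) writing $A_{\ge\lambda}=A_{\Gamma_{\ge\lambda}}$ and $A_{>\lambda}=A_{\Gamma_{>\lambda}}$, $A$ is the span of $\{A_{\ge\mu}:\mu\in\Lambda\}$ and $A_{>\lambda}$ is the span of $\{A_{\ge\mu}:\mu>\lambda\}$ for every $\lambda$; (3) for each $\lambda\in\Lambda$ there is a left $A$-module $M^\lambda$, finitely generated and free over $R$, such that whenever $\Gamma\subseteq\Gamma'$ are order ideals with $\Gamma'\setminus\Gamma=\{\lambda\}$ there is an $A$-$A$-bimodule isomorphism $\alpha:A_{\Gamma'}/A_\Gamma\to M^\lambda\otimes_Ri(M^\lambda)$ with $i\circ\alpha=\alpha\circ i$. *)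

From HB Require Import structures.
From mathcomp Require Import all_boot all_order all_algebra.
Set Implicit Arguments. Unset Strict Implicit. Unset Printing Implicit Defensive.
Import Order.TTheory GRing.Theory Num.Theory.
Local Open Scope ring_scope.

Section CellDefs.
Variables (R : idomainType) (A : algType R).

Definition is_involution (i : A -> A) : Prop :=
  [/\ (forall (r : R) (x y : A), i (r *: x + y) = r *: i x + i y),
      (forall x y : A, i (x * y) = i y * i x) &
      (forall x : A, i (i x) = x)].

Definition in_span (S : A -> Prop) (x : A) : Prop :=
  exists (n : nat) (c : 'I_n -> R) (v : 'I_n -> A),
    (forall j, S (v j)) /\ x = \sum_(j < n) c j *: v j.

Definition is_basis (I : finType) (b : I -> A) : Prop :=
  (forall x : A, exists r : I -> R, x = \sum_(k : I) r k *: b k) /\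
  (forall r : I -> R, \sum_(k : I) r k *: b k = 0 -> forall k, r k = 0).

Definition is_cell_datum (i : A -> A) (d : Order.disp_t) (L : finPOrderType d)
    (T : L -> finType) (c : forall l : L, T l -> T l -> A) : Prop :=
  let breve (l : L) : A -> Prop :=
      in_span (fun x => exists (m : L) (u v : T m), (l < m)%O /\ x = c m u v) in
  [/\ is_basis (fun k : {l : L & (T l * T l)%type} =>
                  c (projT1 k) (projT2 k).1 (projT2 k).2),
      (forall (l : L) (s : T l) (a : A), exists r : T l -> R,
          forall t : T l, breve l (a * c l s t - \sum_(v : T l) r v *: c l v t)) &
      (forall (l : L) (s t : T l), breve l (i (c l s t) - c l t s))].

Definition has_cell_datum (i : A -> A) (d : Order.disp_t) (L : finPOrderType d)
  : Prop :=
  exists (T : L -> finType) (c : forall l : L, T l -> T l -> A),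
    is_cell_datum i c.

Definition is_inv_ideal (i : A -> A) (I : A -> Prop) : Prop :=
  [/\ I 0,
      (forall x y, I x -> I y -> I (x + y)),
      (forall (r : R) x, I x -> I (r *: x)),
      (forall a x, I x -> I (a * x) /\ I (x * a)) &
      (forall x, I x -> I (i x))].

Definition order_ideal (d : Order.disp_t) (L : finPOrderType d) (G : {set L})
  : Prop := forall l m : L, l \in G -> (l <= m)%O -> m \in G.

(** A left A-module, finitely generated and free over R, of rank n:
    modelled as R^n (column vectors) with A acting through an algebra
    homomorphism rho : A -> 'M[R]_n. *)
Definition is_rep (n : nat) (rho : A -> 'M[R]_n) : Prop :=
  [/\ (forall (r : R) (x y : A), rho (r *: x + y) = r *: rho x + rho y),
      (forall x y : A, rho (x * y) = rho x *m rho y) &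
      rho 1 = 1%:M].

(** An A-A-bimodule isomorphism alpha : I'/I -> M (x)_R i(M) commuting with
    i, where M = R^n with action rho.  M (x)_R i(M) is identified with
    'M[R]_n via x (x) i(y) |-> x *m y^T; then the left action is
    X |-> rho a *m X, the right action is X |-> X *m (rho (i a))^T and
    the map i is transposition.  The isomorphism on the quotient is
    given by a map f defined on I' which is R-linear there, surjective
    onto 'M_n, has kernel exactly I, and is compatible with the actions. *)
Definition quotient_iso (i : A -> A) (I I' : A -> Prop) (n : nat)
    (rho : A -> 'M[R]_n) (f : A -> 'M[R]_n) : Prop :=
  [/\ (forall (r : R) x y, I' x -> I' y -> f (r *: x + y) = r *: f x + f y),
      (forall X : 'M[R]_n, exists2 x, I' x & f x = X),
      (forall x, I' x -> (f x = 0 <-> I x)),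
      (forall a x, I' x -> f (a * x) = rho a *m f x /\
                           f (x * a) = f x *m (rho (i a))^T) &
      (forall x, I' x -> f (i x) = (f x)^T)].

Definition is_cell_net (i : A -> A) (d : Order.disp_t) (L : finPOrderType d)
    (net : {set L} -> A -> Prop) : Prop :=
  let ge (l : L) := net [set m : L | (l <= m)%O] in
  let gt (l : L) := net [set m : L | (l < m)%O] in
  [/\ (forall G, order_ideal G -> is_inv_ideal i (net G)),
      (forall x, net set0 x <-> x = 0) /\
      (forall G1 G2, order_ideal G1 -> order_ideal G2 -> G1 \subset G2 ->
          forall x, net G1 x -> net G2 x),
      (forall x : A, in_span (fun y => exists m : L, ge m y) x),
      (forall (l : L) (x : A),
          gt l x <-> in_span (fun y => exists2 m : L, (l < m)%O & ge m y) x) &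
      (forall l : L, exists (n : nat) (rho : A -> 'M[R]_n), is_rep rho /\
          forall G G', order_ideal G -> order_ideal G' -> G \subset G' ->
            G' :\: G = [set l] ->
            exists f : A -> 'M[R]_n, quotient_iso i (net G) (net G') rho f)].

Definition has_cell_net (i : A -> A) (d : Order.disp_t) (L : finPOrderType d)
  : Prop := exists net : {set L} -> A -> Prop, is_cell_net i net.

End CellDefs.

(* From a cell datum: the ideal attached to an order ideal G consists of the
   elements whose coordinates in the basis c vanish at levels outside G.
   Axioms (ii) and (iii) make these i-invariant two-sided ideals, and when
   G' \ G = {l} the coordinates at level l identify A_G'/A_G with the matrices
   indexed by T(l), the left action being given by the matrix of the r^s_v.
   From a cell net: choose c^l_{s,t} in A_{>=l} mapping to the matrix unit
   E_{s,t} under A_{>=l}/A_{>l} = M_n(R); compatibility of this isomorphism with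
   the two actions and with i gives (ii) and (iii), and induction on the number
   of levels above l shows that these lifts span A.  For freeness, peeling
   minimal elements off order ideals produces some basis of A with the same
   index set, and a spanning family indexed like a basis is free because
   PQ = 1 implies QP = 1 for square matrices over a commutative ring. *)

From HB Require Import structures.
From mathcomp Require Import all_boot all_order all_algebra.
From Stdlib Require Import IndefiniteDescription.
Set Implicit Arguments. Unset Strict Implicit. Unset Printing Implicit Defensive.
Import Order.TTheory GRing.Theory Num.Theory.
Local Open Scope ring_scope.

Local Notation cid := (@constructive_indefinite_description _ _).

Section Span.
Variables (R : idomainType) (A : algType R).
Implicit Types (S : A -> Prop) (x y : A).

Lemma span_ind S (Q : A -> Prop) :
  Q 0 -> (forall r x y, Q x -> Q y -> Q (r *: x + y)) ->
  (forall x, S x -> Q x) -> forall x, in_span S x -> Q x.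
Proof.
move=> Q0 Qlin QS _ [n [c [v [Sv ->]]]].
apply: (big_ind Q) => // [x y Qx Qy | j]; first by have := Qlin 1 x y Qx Qy; rewrite scale1r.
by have := Qlin (c j) (v j) 0 (QS _ (Sv j)) Q0; rewrite addr0.
Qed.

Lemma span_mem S x : S x -> in_span S x.
Proof.
by move=> Sx; exists 1%N, (fun=> 1), (fun=> x); rewrite big_ord1 scale1r.
Qed.

Lemma span0 S : in_span S 0.
Proof. by exists 0%N, (fun=> 0), (fun=> 0); rewrite big_ord0; split=> [[]|]. Qed.

Lemma span_lin S r x y : in_span S x -> in_span S y -> in_span S (r *: x + y).
Proof.
move=> [n [c [v [Sv ->]]]] [m [c' [v' [Sv' ->]]]].
exists (n + m)%N, (fun j => match split j with inl a => r * c a | inr b => c' b end),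
  (fun j => match split j with inl a => v a | inr b => v' b end); split.
  by move=> j; case: split.
rewrite big_split_ord scaler_sumr; congr (_ + _); apply: eq_bigr => j _.
  by rewrite -[lshift m j]/(unsplit (inl _ j)) unsplitK scalerA.
by rewrite -[rshift n j]/(unsplit (inr _ j)) unsplitK.
Qed.

Lemma spanD S x y : in_span S x -> in_span S y -> in_span S (x + y).
Proof. by move=> Sx Sy; have := span_lin 1 Sx Sy; rewrite scale1r. Qed.

Lemma spanZ S r x : in_span S x -> in_span S (r *: x).
Proof. by move=> Sx; have := span_lin r Sx (span0 S); rewrite addr0. Qed.

Lemma span_sum S (I : finType) (P : pred I) (F : I -> A) :
  (forall j, P j -> in_span S (F j)) -> in_span S (\sum_(j | P j) F j).
Proof. by move=> SF; apply: big_ind => //; [apply: span0 | apply: spanD]. Qed.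

Lemma span_trans S S' x :
  (forall y, S y -> in_span S' y) -> in_span S x -> in_span S' x.
Proof. by move=> SS'; apply: span_ind => //; [apply: span0 | move=> *; apply: span_lin]. Qed.

End Span.

Section Involution.
Variables (R : idomainType) (A : algType R) (i : A -> A) (hi : is_involution i).

Lemma involution_linear : linear i. Proof. by case: hi. Qed.
Lemma involutionM x y : i (x * y) = i y * i x. Proof. by case: hi. Qed.
Lemma involutionK : involutive i. Proof. by case: hi. Qed.

End Involution.

Section InvIdeal.
Variables (R : idomainType) (A : algType R) (i : A -> A) (I : A -> Prop).
Hypothesis hI : is_inv_ideal i I.

Lemma ideal0 : I 0. Proof. by case: hI. Qed.
Lemma idealD x y : I x -> I y -> I (x + y). Proof. by case: hI => _ + _ _ _; apply. Qed.
Lemma idealZ r x : I x -> I (r *: x). Proof. by case: hI => _ _ + _ _; apply. Qed.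
Lemma idealMl a x : I x -> I (a * x). Proof. by case: hI => _ _ _ + _ Ix => /(_ a x Ix) []. Qed.
Lemma ideal_inv x : I x -> I (i x). Proof. by case: hI => _ _ _ _; apply. Qed.

Lemma idealB x y : I x -> I y -> I (x - y).
Proof. by move=> Ix Iy; rewrite -scaleN1r; apply: idealD => //; apply: idealZ. Qed.

Lemma ideal_sum (J : finType) (P : pred J) (F : J -> A) :
  (forall j, P j -> I (F j)) -> I (\sum_(j | P j) F j).
Proof. by move=> IF; apply: big_ind => //; [apply: ideal0 | apply: idealD]. Qed.

Lemma ideal_span S x : (forall y, S y -> I y) -> in_span S x -> I x.
Proof.
move=> SI; apply: span_ind => //; first exact: ideal0.
by move=> r y z Iy Iz; apply: idealD (idealZ r Iy) Iz.
Qed.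

End InvIdeal.

Section QuotientIso.
Variables (R : idomainType) (A : algType R) (i : A -> A) (I I' : A -> Prop).
Variables (n : nat) (rho : A -> 'M[R]_n) (f : A -> 'M[R]_n).
Hypotheses (hI' : is_inv_ideal i I') (hf : quotient_iso i I I' rho f).

Lemma qiso_lin r x y : I' x -> I' y -> f (r *: x + y) = r *: f x + f y.
Proof. by case: hf => + _ _ _ _; apply. Qed.

Lemma qiso_onto X : exists2 x, I' x & f x = X. Proof. by case: hf. Qed.

Lemma qiso_ker x : I' x -> f x = 0 <-> I x. Proof. by case: hf => _ _ + _ _; apply. Qed.

Lemma qisoMl a x : I' x -> f (a * x) = rho a *m f x.
Proof. by case: hf => _ _ _ + _ I'x => /(_ a x I'x) []. Qed.

Lemma qiso_inv x : I' x -> f (i x) = (f x)^T. Proof. by case: hf => _ _ _ _; apply. Qed.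

Lemma qiso0 : f 0 = 0.
Proof.
have := qiso_lin (-1) (ideal0 hI') (ideal0 hI').
by rewrite scaleN1r addNr scaleN1r addNr.
Qed.

Lemma qisoB x y : I' x -> I' y -> f (x - y) = f x - f y.
Proof. by move=> I'x I'y; rewrite -scaleN1r addrC qiso_lin // addrC scaleN1r. Qed.

Lemma qiso_sum (J : finType) (P : pred J) (r : J -> R) (x : J -> A) :
  (forall j, P j -> I' (x j)) ->
  f (\sum_(j | P j) r j *: x j) = \sum_(j | P j) r j *: f (x j).
Proof.
move=> I'x; suff [] : I' (\sum_(j | P j) r j *: x j) /\
  f (\sum_(j | P j) r j *: x j) = \sum_(j | P j) r j *: f (x j) by [].
apply: (big_rec2 (fun y z => I' y /\ f y = z)); first by split; [apply: ideal0 hI' | apply: qiso0].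
move=> j y z Pj [I'y <-]; split; last by apply: qiso_lin => //; apply: I'x.
by apply: (idealD hI') I'y; apply: (idealZ hI'); apply: I'x.
Qed.

End QuotientIso.

Section SumDelta.
Variables (R : pzRingType) (I : finType).

Lemma sum_mul_eqr (F : I -> R) j : \sum_w F w * (w == j)%:R = F j.
Proof. by under eq_bigr do rewrite mulr_natr mulrb; rewrite -big_mkcond big_pred1_eq. Qed.

Lemma sum_mul_eql (F : I -> R) j : \sum_w F w * (j == w)%:R = F j.
Proof. by under eq_bigr do rewrite eq_sym; apply: sum_mul_eqr. Qed.

Lemma sum_enum_val (F : I -> R) : \sum_(p < #|I|) F (enum_val p) = \sum_w F w.
Proof. by rewrite -big_enum_val. Qed.

End SumDelta.

Section SpanningFree.
Variables (R : comUnitRingType) (V : lmodType R) (K : finType) (b e : K -> V).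
Hypotheses (b_span : forall x, exists r : K -> R, x = \sum_k r k *: b k)
  (e_span : forall x, exists r : K -> R, x = \sum_k r k *: e k)
  (e_free : forall r : K -> R, \sum_k r k *: e k = 0 -> forall k, r k = 0).

Let sum_sum_scale (a : K -> R) (M : K -> K -> R) (w : K -> V) :
  \sum_j a j *: \sum_m M j m *: w m = \sum_m (\sum_j a j * M j m) *: w m.
Proof.
under eq_bigr do rewrite scaler_sumr.
rewrite exchange_big; apply: eq_bigr => m _; rewrite scaler_suml.
by apply: eq_bigr => j _; rewrite scalerA.
Qed.

(* Writing b in terms of e and e in terms of b gives matrices P, Q with
   Q P = 1 by freeness of e; over a commutative ring P Q = 1 follows. *)
Lemma spanning_free_of_basis r : \sum_k r k *: b k = 0 -> forall k, r k = 0.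
Proof.
pose Q k := sval (cid (b_span (e k))).
have Qe k : e k = \sum_j Q k j *: b j := svalP (cid (b_span (e k))).
pose P j := sval (cid (e_span (b j))).
have Pb j : b j = \sum_m P j m *: e m := svalP (cid (e_span (b j))).
have QP k m : \sum_j Q k j * P j m = (k == m)%:R.
  apply/eqP; rewrite -subr_eq0; apply/eqP.
  apply: (@e_free (fun m => \sum_j Q k j * P j m - (k == m)%:R) _ m).
  under eq_bigr do rewrite scalerBl.
  rewrite sumrB -sum_sum_scale (eq_bigr (fun j => Q k j *: b j)) => [|j _]; last by rewrite -Pb.
  rewrite -Qe (bigD1 k) //= eqxx scale1r big1 ?addr0 ?subrr // => j.
  by rewrite eq_sym => /negPf->; rewrite scale0r.
pose mx (F : K -> K -> R) : 'M[R]_#|K| := \matrix_(p, q) F (enum_val p) (enum_val q).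
have QPm : mx Q *m mx P = 1%:M.
  apply/matrixP => p q; rewrite !mxE -(inj_eq enum_val_inj) -QP.
  rewrite -(sum_enum_val (fun j => Q (enum_val p) j * P j (enum_val q))).
  by apply: eq_bigr => j _; rewrite !mxE.
have PQ j m : \sum_k P j k * Q k m = (j == m)%:R.
  move/matrixP: (mulmx1C QPm) => /(_ (enum_rank j) (enum_rank m)).
  rewrite !mxE (inj_eq enum_rank_inj) => <-; rewrite -(sum_enum_val (fun k => P j k * Q k m)).
  by apply: eq_bigr => k _; rewrite !mxE !enum_rankK.
move=> rb0 k; have rP0 m : \sum_j r j * P j m = 0.
  move: m; apply: e_free; rewrite -sum_sum_scale -[RHS]rb0.
  by apply: eq_bigr => j _; rewrite -Pb.
rewrite -(sum_mul_eqr r k); under eq_bigr do rewrite -PQ mulr_sumr.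
rewrite exchange_big big1 // => m _.
by under eq_bigr do rewrite mulrA; rewrite -big_distrl /= rP0 mul0r.
Qed.

End SpanningFree.

Section FinPOrderMinimal.
Variables (d : Order.disp_t) (L : finPOrderType d).

Lemma ex_minimal (G : {set L}) :
  G != set0 -> exists2 l, l \in G & forall m, m \in G -> ~~ (m < l)%O.
Proof.
case/set0Pn => x0 x0G.
case: (arg_minnP (fun x => #|[set m in G | (m < x)%O]|) x0G) => l lG l_min.
exists l => // m mG; apply/negP => ml; have := l_min m mG; apply/negP; rewrite -ltnNge.
apply: proper_card; apply/properP; split.
  by apply/subsetP => u; rewrite !inE => /andP[-> /lt_trans]; apply.
by exists m; rewrite !inE ?mG ?ml ?ltxx.
Qed.

Lemma order_idealD1 (G : {set L}) l :
  order_ideal G -> (forall m, m \in G -> ~~ (m < l)%O) -> order_ideal (G :\ l).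
Proof.
move=> oG l_min m m'; rewrite !inE => /andP[ml mG] mm'; rewrite (oG m m') // andbT.
by apply: contraTneq mm' => m'l; rewrite m'l le_eqVlt negb_or ml l_min.
Qed.

End FinPOrderMinimal.

Section Tagged.
Variables (I : finType) (T_ : I -> finType).

Lemma untag_Tagged (V : Type) (idx : V) (j : I) (F : T_ j -> V) (x : T_ j) :
  untag idx F (Tagged T_ x) = F x.
Proof. by rewrite /untag /=; case: eqP => // e; rewrite (eq_axiomK e). Qed.

Lemma sum_tag_eq (V : nmodType) (F : {j : I & T_ j} -> V) (j : I) :
  \sum_(k | tag k == j) F k = \sum_(x : T_ j) F (Tagged T_ x).
Proof.
transitivity (\sum_(m | m == j) \sum_(x : T_ m) F (Tagged T_ x)); last exact: big_pred1_eq.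
rewrite (sig_big_dep (fun m => m == j) (fun _ _ => true) (fun m x => F (Tagged T_ x))).
by apply: eq_big => [k|[]]; rewrite ?andbT.
Qed.

End Tagged.

Section CellDatumToNet.
Variables (R : idomainType) (A : algType R) (i : A -> A) (hi : is_involution i).
Variables (d : Order.disp_t) (L : finPOrderType d) (T : L -> finType).
Variables (c : forall l : L, T l -> T l -> A) (hc : is_cell_datum i c).
Arguments c : clear implicits.

HB.instance Definition _ := GRing.isLinear.Build R A A *:%R i (involution_linear hi).

Local Notation cell_index := {l : L & (T l * T l)%type}.
Definition cell_basis (k : cell_index) : A := c (tag k) (tagged k).1 (tagged k).2.
Definition cell_tag l (s t : T l) : cell_index := Tagged (fun m => (T m * T m)%type) (s, t).

Lemma cell_coords_ex x : exists r : {ffun cell_index -> R}, x == \sum_k r k *: cell_basis k.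
Proof.
have [[+ _]] := hc => /(_ x) [r ->]; exists (finfun r).
by apply/eqP/eq_bigr => k _; rewrite ffunE.
Qed.

Definition coord (k : cell_index) (x : A) : R := xchoose (cell_coords_ex x) k.

Lemma coordE x : x = \sum_k coord k x *: cell_basis k.
Proof. exact/eqP/(xchooseP (cell_coords_ex x)). Qed.

Lemma coord_unique (r : cell_index -> R) x :
  x = \sum_k r k *: cell_basis k -> forall k, coord k x = r k.
Proof.
have [[_ free] _ _] := hc; move=> Ex k; apply/eqP; rewrite -subr_eq0; apply/eqP; move: k.
apply: (@free (fun k => coord k x - r k)).
by under eq_bigr do rewrite scalerBl; rewrite sumrB -coordE -Ex subrr.
Qed.

Lemma coord_is_scalar k : scalar (coord k).
Proof.
move=> a x y; move: k; apply: coord_unique.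
rewrite {1}(coordE x) {1}(coordE y) scaler_sumr -big_split.
by apply: eq_bigr => k _; rewrite scalerDl scalerA.
Qed.

Section CoordScalar.
Variable k : cell_index.
HB.instance Definition _ := GRing.isLinear.Build R A R *%R (coord k) (coord_is_scalar k).
End CoordScalar.

Lemma coord_basis k k' : coord k' (cell_basis k) = (k == k')%:R.
Proof.
move: k'; apply: coord_unique; rewrite (bigD1 k) //= eqxx scale1r big1 ?addr0 // => j.
by rewrite eq_sym => /negPf->; rewrite scale0r.
Qed.

Lemma coord_cell l (s t s' t' : T l) :
  coord (cell_tag s' t') (c l s t) = ((s == s') && (t == t'))%:R.
Proof. by rewrite -[c l s t]/(cell_basis (cell_tag s t)) coord_basis eq_Tagged. Qed.

Definition supported (P : pred L) (x : A) := forall k, ~~ P (tag k) -> coord k x = 0.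

Section Supported.
Implicit Types (P Q : pred L) (x y : A).

Lemma supported0 P : supported P 0. Proof. by move=> k _; rewrite linear0. Qed.

Lemma supportedD P x y : supported P x -> supported P y -> supported P (x + y).
Proof. by move=> Px Py k Pk; rewrite linearD /= Px // Py // addr0. Qed.

Lemma supportedZ P r x : supported P x -> supported P (r *: x).
Proof. by move=> Px k Pk; rewrite linearZ /= Px // mulr0. Qed.

Lemma supported_sum P (I : finType) (Q : pred I) (F : I -> A) :
  (forall j, Q j -> supported P (F j)) -> supported P (\sum_(j | Q j) F j).
Proof. by move=> PF; apply: big_ind => //; [apply: supported0 | apply: supportedD]. Qed.

Lemma supported_basis P k : P (tag k) -> supported P (cell_basis k).
Proof. by move=> Pk k'; rewrite coord_basis; case: eqP => // <-; rewrite Pk. Qed.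

Lemma supported_cell P l (s t : T l) : P l -> supported P (c l s t).
Proof. exact: (@supported_basis P (cell_tag s t)). Qed.

Lemma supported_sub P Q x : {subset P <= Q} -> supported P x -> supported Q x.
Proof. by move=> PQ Px k Qk; apply: Px; apply: contra Qk; apply: PQ. Qed.

Lemma supported_decomp P x :
  supported P x -> x = \sum_(k | P (tag k)) coord k x *: cell_basis k.
Proof.
move=> Px; rewrite {1}(coordE x) (bigID (fun k => P (tag k))) /=.
by rewrite [X in _ + X]big1 ?addr0 // => k /Px->; rewrite scale0r.
Qed.

Definition cell_gen P (y : A) := exists m (u v : T m), P m /\ y = c m u v.

Lemma supportedP P x : supported P x <-> in_span (cell_gen P) x.
Proof.
split=> [/supported_decomp-> | ].
  apply: span_sum => k Pk; apply/spanZ/span_mem.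
  by exists (tag k), (tagged k).1, (tagged k).2.
apply: span_ind => [|r y z Py Pz|_ [m [u [v [Pm ->]]]]]; first exact: supported0.
  by apply: supportedD (supportedZ _ Py) Pz.
exact: supported_cell.
Qed.

Definition cell_ideal (G : {set L}) := supported (fun m => m \in G).

Definition upclosed P := forall l m, P l -> (l <= m)%O -> P m.

Lemma supported_above_cell P l x :
  upclosed P -> P l -> supported (fun m => (l < m)%O) x -> supported P x.
Proof. by move=> upP Pl; apply: supported_sub => m /ltW; apply: upP. Qed.

Lemma cell_mul_congr l (s : T l) a : exists r : T l -> R, forall t,
  supported (fun m => (l < m)%O) (a * c l s t - \sum_v r v *: c l v t).
Proof.
have [_ + _] := hc => /(_ l s a) [r Hr]; exists r => t.
exact/(supportedP (fun m => (l < m)%O)).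
Qed.

Lemma cell_inv_congr l (s t : T l) : supported (fun m => (l < m)%O) (i (c l s t) - c l t s).
Proof. by have [_ _ /(_ l s t) ?] := hc; apply/(supportedP (fun m => (l < m)%O)). Qed.

Lemma supportedMl P a x : upclosed P -> supported P x -> supported P (a * x).
Proof.
move=> upP /supported_decomp->; rewrite mulr_sumr; apply: supported_sum => -[l [s t]] /= Pl.
rewrite -scalerAr; apply: supportedZ; have [r /(_ t) Hr] := cell_mul_congr s a.
rewrite -(subrK (\sum_v r v *: c l v t) (a * c l s t)).
apply: supportedD; first exact: supported_above_cell Hr.
by apply: supported_sum => v _; apply/supportedZ/supported_cell.
Qed.

Lemma supported_inv P x : upclosed P -> supported P x -> supported P (i x).
Proof.
move=> upP /supported_decomp->; rewrite linear_sum; apply: supported_sum => -[l [s t]] /= Pl.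
rewrite linearZ /cell_basis /=; apply: supportedZ; rewrite -(subrK (c l t s) (i (c l s t))).
apply: supportedD; last exact: supported_cell.
exact: supported_above_cell (cell_inv_congr s t).
Qed.

Lemma supportedMr P a x : upclosed P -> supported P x -> supported P (x * a).
Proof.
move=> upP Px; rewrite -[x * a](involutionK hi) (involutionM hi).
by apply: supported_inv => //; apply: supportedMl => //; apply: supported_inv.
Qed.

Section LinearExt.
Variables (M : lmodType R) (P : pred L) (f g : A -> M).
Hypotheses (f_lin : linear f) (g_lin : linear g).
HB.instance Definition _ := GRing.isLinear.Build R A M *:%R f f_lin.
HB.instance Definition _ := GRing.isLinear.Build R A M *:%R g g_lin.

Lemma linear_eq_supported :
  (forall k, P (tag k) -> f (cell_basis k) = g (cell_basis k)) ->
  forall x, supported P x -> f x = g x.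
Proof.
move=> fg x /supported_decomp->; rewrite !linear_sum.
by apply: eq_bigr => k Pk; rewrite !linearZ /= fg.
Qed.

End LinearExt.

End Supported.

Section Layer.
Variable l : L.
Local Notation above := (fun m : L => (l < m)%O).

Lemma upclosed_above : upclosed above.
Proof. by move=> m m' lm /(lt_le_trans lm). Qed.

Definition breve_eq x y := supported above (x - y).

Lemma breve_eq_trans x y z : breve_eq x y -> breve_eq y z -> breve_eq x z.
Proof. by move=> xy yz; rewrite /breve_eq -(subrK y x) -addrA; apply: supportedD. Qed.

Lemma breve_eq_sum (I : finType) (F G : I -> A) :
  (forall j, breve_eq (F j) (G j)) -> breve_eq (\sum_j F j) (\sum_j G j).
Proof. by move=> FG; rewrite /breve_eq -sumrB; apply: supported_sum => j _; apply: FG. Qed.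

Lemma breve_eqZ a x y : breve_eq x y -> breve_eq (a *: x) (a *: y).
Proof. by rewrite /breve_eq -scalerBr; apply: supportedZ. Qed.

Lemma breve_eqMl a x y : breve_eq x y -> breve_eq (a * x) (a * y).
Proof. by rewrite /breve_eq -mulrBr; apply/supportedMl/upclosed_above. Qed.

Lemma breve_eq_inv x y : breve_eq x y -> breve_eq (i x) (i y).
Proof. by rewrite /breve_eq -linearB; apply/supported_inv/upclosed_above. Qed.

Lemma breve_eq_coord x y (s t : T l) :
  breve_eq x y -> coord (cell_tag s t) x = coord (cell_tag s t) y.
Proof.
move=> xy; apply/eqP; rewrite -subr_eq0 -linearB; apply/eqP.
by apply: xy; rewrite /= ltxx.
Qed.

(* The coefficients r^s_v(a) of the cell datum, read off at t = s. *)
Definition act_coef a (s v : T l) : R := coord (cell_tag v s) (a * c l s s).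

Lemma cell_mul_breve a (s t : T l) :
  breve_eq (a * c l s t) (\sum_v act_coef a s v *: c l v t).
Proof.
have [r Hr] := cell_mul_congr s a.
rewrite (eq_bigr (fun v => r v *: c l v t)) => [|v _]; first exact: Hr.
rewrite /act_coef (breve_eq_coord v s (Hr s)) linear_sum.
by under eq_bigr do rewrite linearZ /= coord_cell eqxx andbT; rewrite sum_mul_eqr.
Qed.

Lemma coord_mul_cell a (s t v t' : T l) :
  coord (cell_tag v t') (a * c l s t) = (t == t')%:R * act_coef a s v.
Proof.
rewrite (breve_eq_coord v t' (cell_mul_breve a s t)) linear_sum.
under eq_bigr do rewrite linearZ /= coord_cell -mulnb natrM mulrA.
by rewrite -big_distrl /= sum_mul_eqr mulrC.
Qed.

Lemma coord_cell_mul a (s t s' v : T l) :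
  coord (cell_tag s' v) (c l s t * a) = (s == s')%:R * act_coef (i a) t v.
Proof.
have cell_mulr_breve : breve_eq (c l s t * a) (\sum_w act_coef (i a) t w *: c l s w).
  rewrite -[c l s t * a](involutionK hi) (involutionM hi).
  apply: breve_eq_trans (breve_eq_inv (breve_eq_trans (breve_eqMl (i a) (cell_inv_congr s t))
    (cell_mul_breve (i a) t s))) _.
  by rewrite linear_sum; apply: breve_eq_sum => w; rewrite linearZ; apply/breve_eqZ/cell_inv_congr.
rewrite (breve_eq_coord s' v cell_mulr_breve) linear_sum.
under eq_bigr do rewrite linearZ /= coord_cell -mulnb natrM mulrCA.
by rewrite -mulr_sumr sum_mul_eqr.
Qed.

Definition cell_rep a : 'M[R]_#|T l| :=
  \matrix_(p, q) act_coef a (enum_val q) (enum_val p).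

Definition layer_mx x : 'M[R]_#|T l| :=
  \matrix_(p, q) coord (cell_tag (enum_val p) (enum_val q)) x.

Lemma layer_mx_is_linear : linear layer_mx.
Proof. by move=> r x y; apply/matrixP => p q; rewrite !mxE linearP. Qed.

HB.instance Definition _ := GRing.isLinear.Build R A _ *:%R layer_mx layer_mx_is_linear.

Lemma cell_rep_is_rep : is_rep cell_rep.
Proof.
split=> [r x y | x y |]; apply/matrixP => p q; rewrite !mxE /act_coef.
- by rewrite mulrDl -scalerAl linearP.
- rewrite -mulrA (breve_eq_coord _ _ (breve_eqMl x (cell_mul_breve y _ _))).
  rewrite mulr_sumr linear_sum.
  under eq_bigr do rewrite -scalerAr linearZ /= coord_mul_cell eqxx mul1r.
  rewrite -(sum_enum_val (fun w => act_coef y (enum_val q) w * act_coef x w (enum_val p))).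
  by apply: eq_bigr => w _; rewrite !mxE mulrC.
- by rewrite mul1r coord_cell eqxx andbT (inj_eq enum_val_inj) eq_sym.
Qed.

Lemma layer_mx0 (P : pred L) x : ~~ P l -> supported P x -> layer_mx x = 0.
Proof. by move=> Pl Px; apply/matrixP => p q; rewrite !mxE Px. Qed.

Lemma layer_mx_lift (X : 'M[R]_#|T l|) :
  layer_mx (\sum_p \sum_q X p q *: c l (enum_val p) (enum_val q)) = X.
Proof.
apply/matrixP => p q; rewrite mxE linear_sum.
under eq_bigr do rewrite linear_sum; under eq_bigr do under eq_bigr do
  rewrite linearZ /= coord_cell !(inj_eq enum_val_inj) -mulnb natrM mulrA.
by under eq_bigr do rewrite sum_mul_eqr; rewrite sum_mul_eqr.
Qed.

Section LayerQuotient.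
Variables G G' : {set L}.
Hypotheses (oG : order_ideal G) (GG'l : G' :\: G = [set l]).

Let upG : upclosed (fun m => m \in G) := oG.

Let lG'G : (l \in G') && (l \notin G).
Proof. by move: (set11 l); rewrite -GG'l inE andbC. Qed.

Let G'_G m : m \in G' -> m != l -> m \in G.
Proof.
move=> mG' ml; apply/negPn/negP => mNG.
have : m \in G' :\: G by rewrite inE mNG.
by rewrite GG'l inE (negPf ml).
Qed.

Let layer_mxG x : cell_ideal G x -> layer_mx x = 0.
Proof. by apply: layer_mx0; case/andP: lG'G. Qed.

Lemma layer_mx_ext (M : lmodType R) (f g : A -> M) : linear f -> linear g ->
  (forall x, cell_ideal G x -> f x = g x) -> (forall s t, f (c l s t) = g (c l s t)) ->
  forall x, cell_ideal G' x -> f x = g x.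
Proof.
move=> f_lin g_lin fgG fgl; apply: linear_eq_supported => // -[m [s t]] /= mG'.
have [ml|ml] := eqVneq m l; first by subst m; apply: fgl.
by apply: fgG; apply: supported_cell; apply: G'_G.
Qed.

Lemma layer_mx_ker x : cell_ideal G' x -> layer_mx x = 0 <-> cell_ideal G x.
Proof.
move=> G'x; split=> [/matrixP l0 | ]; last exact: layer_mxG.
move=> [m [s t]] /= mNG; have [ml|ml] := eqVneq m l; last first.
  by apply: G'x; apply: contra mNG => /G'_G; apply.
subst m; have := l0 (enum_rank s) (enum_rank t).
by rewrite !mxE !enum_rankK.
Qed.

Lemma layer_mxMl a x : cell_ideal G' x -> layer_mx (a * x) = cell_rep a *m layer_mx x.
Proof.
move: x; apply: (@layer_mx_ext _ (fun x => layer_mx (a * x)) (fun x => cell_rep a *m layer_mx x))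
  => [r y z | r y z | y Gy | s t] /=.
- by rewrite mulrDr -scalerAr linearP.
- by rewrite linearP mulmxDr scalemxAr.
- by rewrite !layer_mxG ?mulmx0 //; exact (supportedMl a upG Gy).
apply/matrixP => p q; rewrite !mxE coord_mul_cell.
under eq_bigr do rewrite !mxE coord_cell.
rewrite (sum_enum_val (fun w => act_coef a w (enum_val p) * ((s == w) && (t == enum_val q))%:R)).
under eq_bigr do rewrite -mulnb natrM mulrA.
by rewrite -big_distrl /= sum_mul_eql mulrC.
Qed.

Lemma layer_mxMr a x :
  cell_ideal G' x -> layer_mx (x * a) = layer_mx x *m (cell_rep (i a))^T.
Proof.
move: x; apply: (@layer_mx_ext _ (fun x => layer_mx (x * a)) (fun x => layer_mx x *m _))
  => [r y z | r y z | y Gy | s t] /=.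
- by rewrite mulrDl -scalerAl linearP.
- by rewrite linearP mulmxDl scalemxAl.
- by rewrite !layer_mxG ?mul0mx //; exact (supportedMr a upG Gy).
apply/matrixP => p q; rewrite !mxE coord_cell_mul.
under eq_bigr do rewrite !mxE coord_cell.
rewrite (sum_enum_val (fun w => ((s == enum_val p) && (t == w))%:R * act_coef (i a) w (enum_val q))).
under eq_bigr do rewrite -mulnb natrM -mulrA [_ * act_coef _ _ _]mulrC.
by rewrite -mulr_sumr sum_mul_eql.
Qed.

Lemma layer_mx_inv x : cell_ideal G' x -> layer_mx (i x) = (layer_mx x)^T.
Proof.
move: x; apply: (@layer_mx_ext _ (fun x => layer_mx (i x)) (fun x => (layer_mx x)^T))
  => [r y z | r y z | y Gy | s t] /=.
- by rewrite !linearP.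
- by rewrite !linearP.
- by rewrite !layer_mxG ?trmx0 //; exact (supported_inv upG Gy).
apply/matrixP => p q; rewrite !mxE (breve_eq_coord _ _ (cell_inv_congr s t)).
by rewrite !coord_cell andbC.
Qed.

Lemma layer_quotient_iso : quotient_iso i (cell_ideal G) (cell_ideal G') cell_rep layer_mx.
Proof.
split=> [r x y _ _ | X | x | a x G'x | x]; first exact: linearP.
- exists (\sum_p \sum_q X p q *: c l (enum_val p) (enum_val q)); last exact: layer_mx_lift.
  apply: supported_sum => p _; apply: supported_sum => q _; apply/supportedZ/supported_cell.
  by case/andP: lG'G.
- exact: layer_mx_ker.
- by rewrite layer_mxMl ?layer_mxMr.
- exact: layer_mx_inv.
Qed.

End LayerQuotient.
End Layer.

Lemma cell_net_of_datum : is_cell_net i cell_ideal.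
Proof.
split=> [G oG | | x | l x | l].
- split=> [|x y|r x|a x Gx|x Gx]; [exact: supported0 | exact: supportedD | exact: supportedZ | |].
    by split; [exact (supportedMl a oG Gx) | exact (supportedMr a oG Gx)].
  exact (supported_inv oG Gx).
- split=> [x | G1 G2 _ _ /subsetP G12 x]; last by apply: supported_sub.
  split=> [/supported_decomp-> | ->]; last exact: supported0.
  by rewrite big_pred0 // => k; rewrite in_set0.
- rewrite (coordE x); apply: span_sum => k _; apply/spanZ/span_mem.
  by exists (tag k); apply: supported_basis; rewrite inE.
- split=> [/supported_decomp-> | ].
    apply: span_sum => k; rewrite inE => lk; apply/spanZ/span_mem.
    by exists (tag k) => //; apply: supported_basis; rewrite inE.
  apply: span_ind => [|r y z Gy Gz|y [m lm]]; first exact: supported0.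
    exact: supportedD (supportedZ _ Gy) Gz.
  by apply: supported_sub => m'; rewrite !inE; apply: lt_le_trans.
- exists #|T l|, (cell_rep l); split; first exact: cell_rep_is_rep.
  by move=> G G' oG _ _ GG'l; exists (layer_mx l); apply: layer_quotient_iso.
Qed.

End CellDatumToNet.

Section CellNetToDatum.
Variables (R : idomainType) (A : algType R) (i : A -> A).
Variables (d : Order.disp_t) (L : finPOrderType d) (net : {set L} -> A -> Prop).
Hypothesis hn : is_cell_net i net.

Definition ge_set (l : L) := [set m : L | (l <= m)%O].
Definition gt_set (l : L) := [set m : L | (l < m)%O].

Lemma order_ideal_ge l : order_ideal (ge_set l).
Proof. by move=> m m'; rewrite !inE; apply: le_trans. Qed.

Lemma order_ideal_gt l : order_ideal (gt_set l).
Proof. by move=> m m'; rewrite !inE; apply: lt_le_trans. Qed.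

Lemma ge_setD_gt l : ge_set l :\: gt_set l = [set l].
Proof.
apply/setP => m; rewrite !inE lt_def.
by case: (m =P l) => [->|_]; rewrite ?lexx //= ?andNb.
Qed.

Lemma net_ideal G : order_ideal G -> is_inv_ideal i (net G).
Proof. by case: hn => + _ _ _ _; apply. Qed.

Lemma net_mono G1 G2 : order_ideal G1 -> order_ideal G2 -> G1 \subset G2 ->
  forall x, net G1 x -> net G2 x.
Proof. by case: hn => _ [_ +] _ _ _; apply. Qed.

Lemma net_setT x : net [set: L] x.
Proof.
have [_ _ span_ge _ _] := hn; have oT : order_ideal [set: L] by move=> ? ?; rewrite !inE.
apply: (ideal_span (net_ideal oT) _ (span_ge x)) => y [m].
exact: (net_mono (@order_ideal_ge m) oT (subsetT _) (x := y)).
Qed.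

Lemma net_layer l : exists (n : nat) (rho : A -> 'M[R]_n), forall G G',
  order_ideal G -> order_ideal G' -> G \subset G' -> G' :\: G = [set l] ->
  exists f : A -> 'M[R]_n, quotient_iso i (net G) (net G') rho f.
Proof. by have [_ _ _ _ /(_ l) [n [rho [_ iso]]]] := hn; exists n, rho. Qed.

Definition net_dim l := sval (cid (net_layer l)).
Definition net_rep l : A -> 'M[R]_(net_dim l) := sval (cid (svalP (cid (net_layer l)))).

Lemma net_layer_iso l G G' :
  order_ideal G -> order_ideal G' -> G \subset G' -> G' :\: G = [set l] ->
  exists f, quotient_iso i (net G) (net G') (net_rep l) f.
Proof. exact: (svalP (cid (svalP (cid (net_layer l))))). Qed.

Lemma net_proj_ex l :
  exists f, quotient_iso i (net (gt_set l)) (net (ge_set l)) (net_rep l) f.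
Proof.
apply: net_layer_iso (@order_ideal_gt l) (@order_ideal_ge l) _ (ge_setD_gt l).
by apply/subsetP => m; rewrite !inE; apply: ltW.
Qed.

Definition net_proj l : A -> 'M[R]_(net_dim l) := sval (cid (net_proj_ex l)).

Lemma net_projP l : quotient_iso i (net (gt_set l)) (net (ge_set l)) (net_rep l) (net_proj l).
Proof. exact: svalP (cid (net_proj_ex l)). Qed.

Lemma net_cell_ex l (s t : 'I_(net_dim l)) :
  exists x, net (ge_set l) x /\ net_proj l x = delta_mx s t.
Proof. by have [x ? ?] := qiso_onto (net_projP l) (delta_mx s t); exists x. Qed.

Definition net_cell l (s t : 'I_(net_dim l)) : A := sval (cid (net_cell_ex s t)).

Lemma net_cell_ge l (s t : 'I_(net_dim l)) : net (ge_set l) (net_cell s t).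
Proof. exact: (svalP (cid (net_cell_ex s t))).1. Qed.

Lemma net_proj_cell l (s t : 'I_(net_dim l)) : net_proj l (net_cell s t) = delta_mx s t.
Proof. exact: (svalP (cid (net_cell_ex s t))).2. Qed.

Definition lift_gen (P : pred L) (y : A) :=
  exists m (u v : 'I_(net_dim m)), P m /\ y = net_cell u v.

Lemma lift_gen_sub (P Q : pred L) x :
  {subset P <= Q} -> in_span (lift_gen P) x -> in_span (lift_gen Q) x.
Proof.
move=> PQ; apply: span_trans => _ [m [u [v [Pm ->]]]].
by apply: span_mem; exists m, u, v; split=> //; apply: PQ.
Qed.

Definition lift_of l x : A :=
  \sum_(p : 'I_(net_dim l) * 'I_(net_dim l)) net_proj l x p.1 p.2 *: net_cell p.1 p.2.

Lemma lift_of_ge l x : net (ge_set l) (lift_of l x).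
Proof.
have ge_ideal := net_ideal (@order_ideal_ge l).
by apply: (ideal_sum ge_ideal) => p _; apply/(idealZ ge_ideal)/net_cell_ge.
Qed.

Lemma sub_lift_of_gt l x : net (ge_set l) x -> net (gt_set l) (x - lift_of l x).
Proof.
have ge_ideal := net_ideal (@order_ideal_ge l); move=> lx.
have lx' : net (ge_set l) (x - lift_of l x) by apply: (idealB ge_ideal) (lift_of_ge l x).
apply: (qiso_ker (net_projP l) lx').1.
rewrite (qisoB (net_projP l)) //; last exact: lift_of_ge.
rewrite /lift_of (qiso_sum ge_ideal (net_projP l)) => [|p _]; last exact: net_cell_ge.
under eq_bigr do rewrite net_proj_cell.
by rewrite -(pair_bigA _ (fun s t => net_proj l x s t *: delta_mx s t)) -matrix_sum_delta subrr.
Qed.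

(* Induction on #|gt_set m|: what the lifts at level m miss of x lies in
   net (gt_set m), which is spanned by the nets at strictly higher levels. *)
Lemma net_ge_span m x : net (ge_set m) x -> in_span (lift_gen (fun m' => (m <= m')%O)) x.
Proof.
have [k] := ubnP #|gt_set m|; elim: k m x => // k IH m x gt_m mx.
have [_ _ _ gtE _] := hn.
rewrite -(subrK (lift_of m x) x); apply: spanD; last first.
  by apply: span_sum => p _; apply/spanZ/span_mem; exists m, p.1, p.2.
apply: span_trans ((gtE _ _).1 (sub_lift_of_gt mx)) => y [m' mm' m'y].
have gt_m' : (#|gt_set m'| < k)%N.
  rewrite -ltnS; apply: leq_trans gt_m; rewrite ltnS; apply: proper_card; apply/properP; split.
    by apply/subsetP => u; rewrite !inE; apply: lt_trans mm'.
  by exists m'; rewrite !inE ?ltxx.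
by apply: lift_gen_sub (IH m' y gt_m' m'y) => u; apply/le_trans/ltW.
Qed.

Lemma net_gt_span l x : net (gt_set l) x -> in_span (lift_gen (fun m => (l < m)%O)) x.
Proof.
have [_ _ _ gtE _] := hn; move=> /gtE; apply: span_trans => y [m lm my].
by apply: lift_gen_sub (net_ge_span my) => u; apply: lt_le_trans.
Qed.

Lemma net_cell_inv l (s t : 'I_(net_dim l)) :
  in_span (lift_gen (fun m => (l < m)%O)) (i (net_cell s t) - net_cell t s).
Proof.
have ge_ideal := net_ideal (@order_ideal_ge l).
have inv_ge : net (ge_set l) (i (net_cell s t)) by apply/(ideal_inv ge_ideal)/net_cell_ge.
apply/net_gt_span/(qiso_ker (net_projP l) (idealB ge_ideal inv_ge (net_cell_ge t s))).1.
rewrite (qisoB (net_projP l)) //; last exact: net_cell_ge.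
rewrite (qiso_inv (net_projP l)); last exact: net_cell_ge.
by rewrite !net_proj_cell trmx_delta subrr.
Qed.

Lemma net_cell_mul l (s : 'I_(net_dim l)) a : exists r : 'I_(net_dim l) -> R, forall t,
  in_span (lift_gen (fun m => (l < m)%O)) (a * net_cell s t - \sum_v r v *: net_cell v t).
Proof.
have ge_ideal := net_ideal (@order_ideal_ge l).
exists (fun v => net_rep l a v s) => t.
have mul_ge : net (ge_set l) (a * net_cell s t) by apply/(idealMl ge_ideal)/net_cell_ge.
have sum_ge : net (ge_set l) (\sum_v net_rep l a v s *: net_cell v t).
  by apply: (ideal_sum ge_ideal) => v _; apply/(idealZ ge_ideal)/net_cell_ge.
apply/net_gt_span/(qiso_ker (net_projP l) (idealB ge_ideal mul_ge sum_ge)).1.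
rewrite (qisoB (net_projP l)) // (qiso_sum ge_ideal (net_projP l)) => [|v _]; last exact: net_cell_ge.
rewrite (qisoMl (net_projP l)); last exact: net_cell_ge.
rewrite net_proj_cell; apply/eqP; rewrite subr_eq0; apply/eqP.
apply/matrixP => p q; rewrite !mxE summxE.
under eq_bigr do rewrite !mxE -mulnb natrM mulrA.
under [RHS]eq_bigr do rewrite net_proj_cell !mxE -mulnb natrM mulrA.
by rewrite -!big_distrl /= sum_mul_eqr sum_mul_eql.
Qed.

Local Notation net_index := {l : L & ('I_(net_dim l) * 'I_(net_dim l))%type}.

Definition net_basis (k : net_index) : A := net_cell (tagged k).1 (tagged k).2.

Lemma net_basis_span x : exists r : net_index -> R, x = \sum_k r k *: net_basis k.
Proof.
have [_ _ span_ge _ _] := hn.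
have : in_span (lift_gen predT) x.
  apply: span_trans (span_ge x) => y [m /net_ge_span]; exact: lift_gen_sub.
move: x; apply: span_ind => [|a x y [r1 ->] [r2 ->] | _ [m [u [v [_ ->]]]]].
- by exists (fun=> 0); rewrite big1 // => k _; rewrite scale0r.
- exists (fun k => a * r1 k + r2 k); rewrite scaler_sumr -big_split /=.
  by apply: eq_bigr => k _; rewrite scalerDl scalerA.
- exists (fun k => (k == Tagged _ (u, v))%:R).
  rewrite (bigD1 (Tagged _ (u, v))) //= eqxx scale1r big1 ?addr0 // => k /negPf->.
  by rewrite scale0r.
Qed.

Definition basis_on (G : {set L}) (e : net_index -> A) :=
  [/\ forall k, tag k \in G -> net G (e k),
      forall x, net G x -> exists r : net_index -> R, x = \sum_(k | tag k \in G) r k *: e k &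
      forall r : net_index -> R, \sum_(k | tag k \in G) r k *: e k = 0 ->
        forall k, tag k \in G -> r k = 0].

Lemma basis_on_set0 : basis_on set0 (fun=> 0).
Proof.
have [_ [net0 _] _ _ _] := hn.
split=> [k | x /net0-> | r _ k]; rewrite ?in_set0 //.
by exists (fun=> 0); rewrite big1 // => k _; rewrite scaler0.
Qed.

Section BasisExtension.
Variables (G0 G : {set L}) (lam : L) (e0 : net_index -> A).
Hypotheses (oG0 : order_ideal G0) (oG : order_ideal G) (sG0G : G0 \subset G).
Hypotheses (GG0 : G :\: G0 = [set lam]) (e0_basis : basis_on G0 e0).
Variable f : A -> 'M[R]_(net_dim lam).
Hypothesis hf : quotient_iso i (net G0) (net G) (net_rep lam) f.

Let G_ideal := net_ideal oG.

Let lift_ex (p : 'I_(net_dim lam) * 'I_(net_dim lam)) :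
  exists x, net G x /\ f x = delta_mx p.1 p.2.
Proof. by have [x ? ?] := qiso_onto hf (delta_mx p.1 p.2); exists x. Qed.

Let lift p := sval (cid (lift_ex p)).
Let lift_G p : net G (lift p). Proof. exact: (svalP (cid (lift_ex p))).1. Qed.
Let f_lift p : f (lift p) = delta_mx p.1 p.2. Proof. exact: (svalP (cid (lift_ex p))).2. Qed.

Let e k := untag (e0 k) lift k.
Let e_lam p : e (Tagged _ p) = lift p. Proof. exact: untag_Tagged. Qed.
Let e_G0 k : tag k != lam -> e k = e0 k. Proof. exact: untag_dflt. Qed.

Let lam_G : lam \in G. Proof. by move: (set11 lam); rewrite -GG0 inE => /andP[]. Qed.

Let inG m : (m \in G) = (m == lam) || (m \in G0).
Proof.
have := congr1 (fun S : {set L} => m \in S) GG0; rewrite !inE.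
case: (m =P lam) => [->|_] /=; first by rewrite lam_G.
by case: (boolP (m \in G0)) => [/(subsetP sG0G)->|_] //= ->.
Qed.

Let lam_G0 : lam \notin G0. Proof. by move: (set11 lam); rewrite -GG0 inE => /andP[]. Qed.

Let sum_G (V : nmodType) (F : net_index -> V) : \sum_(k | tag k \in G) F k =
  \sum_(p : 'I_(net_dim lam) * 'I_(net_dim lam)) F (Tagged _ p) + \sum_(k | tag k \in G0) F k.
Proof.
rewrite (bigID (fun k => tag k == lam)) /=.
rewrite -(@sum_tag_eq _ (fun l => ('I_(net_dim l) * 'I_(net_dim l))%type) _ F lam).
congr (_ + _); apply: eq_bigl => k.
  by rewrite inG; case: eqP => _; rewrite ?andbF.
by rewrite inG; case: eqP => [->|_]; rewrite ?(negPf lam_G0) ?andbT.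
Qed.

Let e_G0_mem k : tag k \in G0 -> e k = e0 k.
Proof. by move=> kG0; apply: e_G0; apply: contraNneq lam_G0 => <-. Qed.

Let e_mem k : tag k \in G -> net G (e k).
Proof.
case: k => m p; have [ml|ml] := eqVneq m lam; first by subst m; rewrite e_lam.
rewrite e_G0 // inG (negPf ml) => /= mG0.
have [G0_mem _ _] := e0_basis.
exact: (net_mono oG0 oG sG0G (G0_mem (existT _ m p) mG0)).
Qed.

Let e_span x : net G x -> exists r : net_index -> R, x = \sum_(k | tag k \in G) r k *: e k.
Proof.
move=> Gx; pose S := \sum_(p : 'I_(net_dim lam) * 'I_(net_dim lam)) f x p.1 p.2 *: lift p.
have S_G : net G S by apply: (ideal_sum G_ideal) => p _; apply/(idealZ G_ideal)/lift_G.
have fxS : f (x - S) = 0.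
  rewrite (qisoB hf) // (qiso_sum G_ideal hf) => [|p _]; last exact: lift_G.
  under eq_bigr do rewrite f_lift.
  by rewrite -(pair_bigA _ (fun s t => f x s t *: delta_mx s t)) -matrix_sum_delta subrr.
have [_ + _] := e0_basis => /(_ _ ((qiso_ker hf (idealB G_ideal Gx S_G)).1 fxS)) [r0 xS].
exists (fun k => untag (r0 k) (fun p => f x p.1 p.2) k).
rewrite sum_G; under eq_bigr do rewrite untag_Tagged e_lam.
rewrite -/S (eq_bigr (fun k => r0 k *: e0 k)) => [|k kG0]; first by rewrite -xS addrC subrK.
by rewrite e_G0_mem // untag_dflt //; apply: contraNneq lam_G0 => <-.
Qed.

Let e_free r : \sum_(k | tag k \in G) r k *: e k = 0 -> forall k, tag k \in G -> r k = 0.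
Proof.
have [G0_mem _ e0_free] := e0_basis.
have r_lam (p : 'I_(net_dim lam) * 'I_(net_dim lam)) :
  \sum_(k | tag k \in G) r k *: e k = 0 -> r (Tagged _ p) = 0.
  move=> /(congr1 f); rewrite (qiso_sum G_ideal hf) => [|k]; last exact: e_mem.
  rewrite (qiso0 G_ideal hf) sum_G [X in _ + X]big1 => [|k kG0]; last first.
    have e0k := G0_mem k kG0.
    by rewrite e_G0_mem // ((qiso_ker hf (net_mono oG0 oG sG0G e0k)).2 e0k) scaler0.
  under eq_bigr do rewrite e_lam f_lift.
  case: p => s t /matrixP /(_ s t); rewrite addr0 summxE !mxE.
  rewrite (bigD1 (s, t)) //= !mxE !eqxx mulr1 big1 ?addr0 // => -[a b].
  by rewrite xpair_eqE !mxE eq_sym [b == t]eq_sym => /negPf->; rewrite mulr0.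
move=> r0 [m p]; have [ml|ml] := eqVneq m lam; first by subst m => _; apply: r_lam.
rewrite inG (negPf ml) /= => mG0; apply: (e0_free r _ (existT _ m p) mG0).
have := r0; rewrite sum_G big1 => [|q _]; last by rewrite r_lam ?scale0r.
rewrite add0r => r0G0; rewrite -[RHS]r0G0.
by apply: eq_bigr => k kG0; rewrite e_G0_mem.
Qed.

Lemma basis_on_extend : exists e, basis_on G e.
Proof. by exists e; split; [apply: e_mem | apply: e_span | apply: e_free]. Qed.

End BasisExtension.

Lemma basis_on_exists G : order_ideal G -> exists e, basis_on G e.
Proof.
have [n] := ubnP #|G|; elim: n G => // n IH G sizeG oG.
have [->|G_neq0] := eqVneq G set0; first by exists (fun=> 0); apply: basis_on_set0.
have [lam lamG lam_min] := ex_minimal G_neq0.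
have oG0 := order_idealD1 oG lam_min.
have GG0 : G :\: (G :\ lam) = [set lam].
  by apply/setP => m; rewrite !inE; case: eqP => [->|_] /=; rewrite ?lamG ?andNb.
have [e0 e0_basis] : exists e0, basis_on (G :\ lam) e0.
  by apply: IH oG0; move: sizeG; rewrite (cardsD1 lam G) lamG.
have [f hf] := net_layer_iso oG0 oG (subD1set G lam) GG0.
exact (basis_on_extend oG0 oG (subD1set G lam) GG0 e0_basis hf).
Qed.

Lemma net_basis_free r : \sum_k r k *: net_basis k = 0 -> forall k, r k = 0.
Proof.
have oT : order_ideal [set: L] by move=> ? ?; rewrite !inE.
have [e [_ e_span e_free]] := basis_on_exists oT.
apply: (@spanning_free_of_basis _ _ _ net_basis e net_basis_span) => [x | c c0 k].
  have [c xc] := e_span x (net_setT x); exists c; rewrite xc.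
  by apply: eq_bigl => k; rewrite in_setT.
apply: (e_free c) => //; rewrite -[RHS]c0.
by apply: eq_bigl => j; rewrite in_setT.
Qed.

Lemma cell_datum_of_net : is_cell_datum i (fun l => @net_cell l).
Proof.
split=> [| l s a | l s t]; [split | exact: net_cell_mul | exact: net_cell_inv].
  exact: net_basis_span.
exact: net_basis_free.
Qed.

End CellNetToDatum.

Theorem mainTheorem2 (R : idomainType) (A : algType R) (i : A -> A)
    (hi : is_involution i) (d : Order.disp_t) (L : finPOrderType d) :
  has_cell_datum i L <-> has_cell_net i L.
Proof.
split=> [[T [c hc]] | [net hn]]; first by exists (cell_ideal hc); apply: cell_net_of_datum.
exists (fun l => 'I_(net_dim hn l) : finType), (fun l => @net_cell _ _ _ _ _ _ hn l).
exact: cell_datum_of_net.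
Qed.
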